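(* Let $U$ be a real-valued utility function satisfying conditions C1, C2, C3 (as defined in the context), and let $U(\epsilon)$ be the associated averaged utility. Then for every POVM $\alpha$ there exists a POVM $\alpha'$ all of whose elements have rank one such that $U(\alpha')\ge U(\alpha)$. Consequently, if $\sup_\epsilon U(\epsilon)$ is attained, it is attained by a POVM consisting of rank-one elements.
   Context: Setting: $H$ finite-dimensional Hilbert space; density operators $\rho_1,\dots,\rho_n$ on $H$ with priors $q_\nu>0$, $\sum q_\nu=1$. A POVM with $m$ outcomes is $\epsilon=(A_1,\dots,A_m)$, $A_y\ge0$, $\sum A_y=\mathbb{1}$. $p(\epsilon_y|N_\nu)=\mathrm{tr}(A_y\rho_\nu)$, $p(N_\nu,\epsilon_y)=q_\nu\mathrm{tr}(A_y\rho_\nu)$. A decision strategy is $\Gamma:\{1,\dots,m\}\to\{0,\dots,n\}$. A utility function assigns a real number $U(\epsilon,y,\Gamma,\nu)$ to every POVM $\epsilon$, outcome $y$, strategy $\Gamma$ for $\epsilon$ and $\nu\in\{1,\dots,n\}$; $U(\epsilon)=\max_\Gamma\sum_y\sum_\nu p(N_\nu,\epsilon_y)U(\epsilon,y,\Gamma,\nu)$. C1: for every POVM $\alpha=(A_1,\dots,A_m)$ and strategy $\Gamma$, if $A_i,A_j$ are nonzero and proportional and $\Gamma(i)=\Gamma(j)$ then $U(\alpha,i,\Gamma,\nu)=U(\alpha,j,\Gamma,\nu)$ for all $\nu$. C2: for every POVM $\alpha$ there is a maximizer $\Gamma^*$ in the definition of $U(\alpha)$ with $\Gamma^*(i)=\Gamma^*(j)$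 whenever $A_i,A_j$ are nonzero and proportional. C3: for a POVM $\alpha$ with strategy $\Gamma$ and $i\ne j$ with $\Gamma(i)=\Gamma(j)$, let $\alpha'$ be obtained by replacing $A_i,A_j$ by the single element $A_i+A_j$ (outcome $i+j$) and $\Gamma'$ the induced strategy ($\Gamma'(i+j)=\Gamma(i)$, otherwise unchanged); then for all $\nu$ with $\mathrm{tr}((A_i+A_j)\rho_\nu)>0$, $U(\alpha',i+j,\Gamma',\nu)\le[\mathrm{tr}(A_i\rho_\nu)U(\alpha,i,\Gamma,\nu)+\mathrm{tr}(A_j\rho_\nu)U(\alpha,j,\Gamma,\nu)]/\mathrm{tr}((A_i+A_j)\rho_\nu)$, with equality if $A_i,A_j$ are nonzero and proportional, and $U(\alpha',k,\Gamma',\nu)=U(\alpha,k,\Gamma,\nu)$ for all $k\ne i,j$.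
   Formalization: A POVM $(A_1,\dots,A_m)$ has only nonzero elements $A_y\ne0$, both in conditions C1–C3 and in the conclusions, so POVMs with zero elements are excluded throughout. Apart from conventions, each condition added here is assumed in the paper as well or is needed for the statement above to hold. *)

(* H = C^d with C an arbitrary numClosedFieldType
   (e.g. algebraic complex numbers); operators are 'M[C]_d. *)
From HB Require Import structures.
From mathcomp Require Import all_boot all_order all_algebra.
Set Implicit Arguments. Unset Strict Implicit. Unset Printing Implicit Defensive.
Import Order.TTheory GRing.Theory Num.Theory.
Local Open Scope ring_scope.

Section Defs.
Variable C : numClosedFieldType.

Definition adjmx d (A : 'M[C]_d) : 'M[C]_d := map_mx Num.conj (trmx A).

Definition psdmx d (A : 'M[C]_d) : Prop :=
  adjmx A = A /\ forall v : 'rV[C]_d, 0 <= (v *m A *m trmx (map_mx Num.conj v)) 0 0.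

Definition density d (rho : 'M[C]_d) : Prop := psdmx rho /\ \tr rho = 1.

Definition povm d m (A : {ffun 'I_m -> 'M[C]_d}) : Prop :=
  (forall y, psdmx (A y)) /\ (forall y, A y != 0) /\ \sum_(y < m) A y = 1%:M.

Definition proportional d (A B : 'M[C]_d) : Prop := exists c : C, A = c *: B.

(* utility function: U m eps y Gamma nu ; strategies are finite functions
   'I_m -> 'I_n.+1 (values 0..n), hypotheses nu range over 'I_n *)
Definition utility d n :=
  forall m : nat, {ffun 'I_m -> 'M[C]_d} -> 'I_m -> {ffun 'I_m -> 'I_n.+1} -> 'I_n -> C.

Definition avgU d n (rho : 'I_n -> 'M[C]_d) (q : 'I_n -> C) (U : utility d n)
    m (A : {ffun 'I_m -> 'M[C]_d}) (G : {ffun 'I_m -> 'I_n.+1}) : C :=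
  \sum_(y < m) \sum_(nu < n) q nu * \tr (A y *m rho nu) * U m A y G nu.

Definition Ubar d n (rho : 'I_n -> 'M[C]_d) (q : 'I_n -> C) (U : utility d n)
    m (A : {ffun 'I_m -> 'M[C]_d}) : C :=
  \big[Order.max / avgU rho q U A [ffun _ => ord0]]_(G : {ffun 'I_m -> 'I_n.+1})
     avgU rho q U A G.

(* merging outcomes i and j (i <> j): outcome j is deleted (the remaining
   outcomes are re-indexed by lift j), and the element at the position of i
   becomes A i + A j *)
Definition mergePOVM d m' (A : {ffun 'I_m'.+1 -> 'M[C]_d}) (i j : 'I_m'.+1)
  : {ffun 'I_m' -> 'M[C]_d} :=
  [ffun k => if lift j k == i then A i + A j else A (lift j k)].

Definition mergeStrat n m' (G : {ffun 'I_m'.+1 -> 'I_n.+1}) (j : 'I_m'.+1)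
  : {ffun 'I_m' -> 'I_n.+1} := [ffun k => G (lift j k)].

Definition condC1 d n (U : utility d n) : Prop :=
  forall m (A : {ffun 'I_m -> 'M[C]_d}) (G : {ffun 'I_m -> 'I_n.+1}) (i j : 'I_m),
    povm A -> A i != 0 -> A j != 0 -> proportional (A i) (A j) -> G i = G j ->
    forall nu, U m A i G nu = U m A j G nu.

Definition condC2 d n (rho : 'I_n -> 'M[C]_d) (q : 'I_n -> C) (U : utility d n) : Prop :=
  forall m (A : {ffun 'I_m -> 'M[C]_d}), povm A ->
    exists Gs : {ffun 'I_m -> 'I_n.+1},
      (forall G, avgU rho q U A G <= avgU rho q U A Gs) /\
      (forall i j, A i != 0 -> A j != 0 -> proportional (A i) (A j) -> Gs i = Gs j).

Definition condC3 d n (rho : 'I_n -> 'M[C]_d) (U : utility d n) : Prop :=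
  forall m' (A : {ffun 'I_m'.+1 -> 'M[C]_d}) (G : {ffun 'I_m'.+1 -> 'I_n.+1})
         (i j : 'I_m'.+1),
    povm A -> i != j -> G i = G j ->
    (forall k : 'I_m', lift j k = i -> forall nu : 'I_n,
       0 < \tr ((A i + A j) *m rho nu) ->
       U m' (mergePOVM A i j) k (mergeStrat G j) nu
         <= (\tr (A i *m rho nu) * U m'.+1 A i G nu
             + \tr (A j *m rho nu) * U m'.+1 A j G nu) / \tr ((A i + A j) *m rho nu)
       /\ (A i != 0 -> A j != 0 -> proportional (A i) (A j) ->
           U m' (mergePOVM A i j) k (mergeStrat G j) nu
           = (\tr (A i *m rho nu) * U m'.+1 A i G nu
              + \tr (A j *m rho nu) * U m'.+1 A j G nu) / \tr ((A i + A j) *m rho nu)))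
    /\
    (forall k : 'I_m', lift j k != i -> forall nu : 'I_n,
       U m' (mergePOVM A i j) k (mergeStrat G j) nu = U m'.+1 A (lift j k) G nu).

End Defs.

From HB Require Import structures.
From mathcomp Require Import all_boot all_order all_algebra.
From mathcomp Require Import sesquilinear spectral.
From mathcomp Require Import zify.
Import Order.TTheory GRing.Theory Num.Theory.
Set Implicit Arguments. Unset Strict Implicit. Unset Printing Implicit Defensive.
Local Open Scope ring_scope.
Local Open Scope sesquilinear_scope.

(* Refinement step: if A_y = P + Q with P, Q nonzero positive semidefinite,
   replace A_y by P and append Q as a new last outcome with the same decision
   as y.  Merging the two new outcomes back gives A, so condition C3 bounds
   the utility of the merged outcome by the p-weighted average of the two
   split ones; hence for every strategy G of A the induced strategy of the
   refined POVM A' does at least as well, and U(A) <= U(A').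

   Iteration: every psd element is W^t* diag(l) W with W unitary and l >= 0
   (spectral theorem).  Peeling off one nonzero eigenvalue of an element with
   at least two of them is a refinement step that lowers the total number of
   surplus nonzero eigenvalues; when none remain, every element has rank one. *)

Section SpectralForm.
Variable C : numClosedFieldType.
Variable d : nat.

Definition nonneg_row (l : 'rV[C]_d) := forall i, 0 <= l 0 i.

Definition spectral_form (X W : 'M[C]_d) (l : 'rV[C]_d) :=
  [/\ W \is unitarymx, nonneg_row l & X = W^t* *m diag_mx l *m W].

Definition support_size (l : 'rV[C]_d) := #|[pred i | l 0 i != 0]|.

Lemma adjmxE (X : 'M[C]_d) : adjmx X = X^t*.
Proof. by []. Qed.

Lemma trmxC_mul m p r (X : 'M[C]_(m, p)) (Y : 'M[C]_(p, r)) :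
  (X *m Y)^t* = Y^t* *m X^t*.
Proof. by rewrite trmx_mul map_mxM. Qed.

Lemma diag_nonneg_herm (l : 'rV[C]_d) : nonneg_row l -> (diag_mx l)^t* = diag_mx l.
Proof.
move=> l_ge0; apply/matrixP=> i j; rewrite !mxE.
case: (eqVneq j i) => [->|nij]; first by rewrite !mulr1n geC0_conj.
by rewrite !mulr0n conjC0.
Qed.

Lemma diag_quadform_ge0 (l u : 'rV[C]_d) : nonneg_row l ->
  0 <= (u *m diag_mx l *m u^t*) 0 0.
Proof.
move=> l_ge0; rewrite mul_mx_diag !mxE; apply: sumr_ge0 => i _; rewrite !mxE.
by rewrite -mulrA mulrCA mulr_ge0 // mul_conjC_ge0.
Qed.

Lemma conj_diag_entry (W M : 'M[C]_d) i :
  (W *m M *m W^t*) i i = (row i W *m M *m (row i W)^t*) 0 0.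
Proof.
rewrite !mxE; apply: eq_bigr => j _; rewrite !mxE; congr (_ * _).
by apply: eq_bigr => k _; rewrite !mxE.
Qed.

Lemma spectral_form_psd X W l : spectral_form X W l -> psdmx X.
Proof.
move=> [_ l_ge0 ->]; split.
  by rewrite adjmxE !trmxC_mul trmxCK diag_nonneg_herm // mulmxA.
move=> v; rewrite map_trmx.
have -> : v *m (W^t* *m diag_mx l *m W) *m v^t*
        = (v *m W^t*) *m diag_mx l *m (v *m W^t*)^t*.
  by rewrite trmxC_mul trmxCK !mulmxA.
exact: diag_quadform_ge0.
Qed.

Lemma unitary_conjK (W D : 'M[C]_d) : W \is unitarymx -> W *m (W^t* *m D *m W) *m W^t* = D.
Proof.
by move=> /unitarymxP WWt; rewrite !mulmxA WWt mul1mx -mulmxA WWt mulmx1.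
Qed.

Lemma spectral_form_exists (X : 'M[C]_d) : psdmx X -> exists W l, spectral_form X W l.
Proof.
move=> [X_herm X_pos].
have /orthomx_spectralP X_spec : X \is normalmx.
  by apply: hermitian_normalmx; rewrite qualifE /= expr0 scale1r -adjmxE X_herm.
rewrite invmx_unitary ?spectral_unitarymx // in X_spec.
set W := spectralmx X in X_spec; set l := spectral_diag X in X_spec.
have W_unitary : W \is unitarymx by exact: spectral_unitarymx.
have l_ge0 : nonneg_row l.
  move=> i; have := unitary_conjK (diag_mx l) W_unitary; rewrite -X_spec.
  move/matrixP/(_ i i); rewrite [diag_mx l i i]mxE eqxx mulr1n => <-.
  by rewrite conj_diag_entry -map_trmx X_pos.
by exists W, l.
Qed.

Lemma trace_psd_mul_ge0 (X R : 'M[C]_d) : psdmx X -> psdmx R -> 0 <= \tr (X *m R).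
Proof.
move=> /spectral_form_exists [W [l [_ l_ge0 ->]]] [_ R_pos].
rewrite -!mulmxA mxtrace_mulC -!mulmxA mul_diag_mx /mxtrace.
apply: sumr_ge0 => i _; rewrite mxE mulr_ge0 // mulmxA conj_diag_entry.
by rewrite -map_trmx R_pos.
Qed.

Lemma spectral_form_neq0 X W l : spectral_form X W l -> (0 < support_size l)%N -> X != 0.
Proof.
move=> [W_unitary _ X_def] /card_gt0P [k]; rewrite inE => lk.
apply: contraNneq lk => X0.
have := unitary_conjK (diag_mx l) W_unitary; rewrite -X_def X0 mulmx0 mul0mx.
by move/matrixP/(_ k k); rewrite !mxE eqxx mulr1n => <-.
Qed.

Lemma spectral_form_rank1 X W l : spectral_form X W l -> X != 0 ->
  (support_size l <= 1)%N -> \rank X = 1%N.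
Proof.
move=> [_ _ X_def] X0 l_small; apply/eqP; rewrite eqn_leq lt0n mxrank_eq0 X0 andbT X_def.
case: (pickP [pred i | l 0 i != 0]) => [k /= lk|l0]; last first.
  suff -> : diag_mx l = 0 by rewrite mulmx0 mul0mx mxrank0.
  by apply/matrixP=> i j; rewrite !mxE (eqP (negbFE (l0 i))) mul0rn.
have l_off : forall i, i != k -> l 0 i = 0.
  move=> i ik; apply/eqP; apply: contraTT l_small => li; rewrite -ltnNge.
  have <- : #|pred2 i k| = 2%N by rewrite card2 ik.
  by apply: subset_leq_card; apply/subsetP => x /pred2P[]->.
have -> : diag_mx l = l 0 k *: delta_mx k k.
  apply/matrixP=> i j; rewrite !mxE.
  have [->|ik] := eqVneq i k; last by rewrite (l_off i ik) mul0rn mulr0.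
  by rewrite andTb eq_sym; case: (j == k); rewrite ?mulr1 ?mulr0.
rewrite (leq_trans (mxrankM_maxl _ _)) // (leq_trans (mxrankM_maxr _ _)) //.
by rewrite (leq_trans (mxrank_scale _ _)) // mxrank_delta.
Qed.

Lemma spectral_form_split X W l : spectral_form X W l -> (1 < support_size l)%N ->
  exists P Q lP lQ, [/\ X = P + Q, spectral_form P W lP, spectral_form Q W lQ,
     support_size lP = 1%N & support_size lQ = (support_size l).-1].
Proof.
move=> [W_unitary l_ge0 X_def] l_big.
have /card_gt0P [k] : (0 < support_size l)%N by apply: ltn_trans l_big.
rewrite inE => lk.
pose lP := \row_i (if i == k then l 0 i else 0).
pose lQ := \row_i (if i == k then 0 else l 0 i).
have lP_ge0 : nonneg_row lP by move=> i; rewrite mxE; case: ifP.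
have lQ_ge0 : nonneg_row lQ by move=> i; rewrite mxE; case: ifP.
exists (W^t* *m diag_mx lP *m W), (W^t* *m diag_mx lQ *m W), lP, lQ; split => //.
- rewrite -mulmxDl -mulmxDr X_def; congr (_ *m _ *m _).
  by apply/matrixP=> i j; rewrite !mxE; case: ifP; rewrite ?mul0rn ?addr0 ?add0r.
- rewrite /support_size (eq_card (B := pred1 k)) ?card1 // => i; rewrite !inE mxE.
  by case: (i =P k) => [->|_]; rewrite ?lk ?eqxx.
- rewrite /support_size [in RHS](cardD1 k) inE lk /=; apply: eq_card => i.
  by rewrite !inE mxE; case: (i =P k); rewrite ?eqxx.
Qed.

End SpectralForm.

Lemma le_bigmax_real (R : numDomainType) (T : eqType) (r : seq T) (F : T -> R) x0 t :
  x0 \is Num.real -> (forall i, F i \is Num.real) -> t \in r ->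
  F t <= \big[Order.max/x0]_(i <- r) F i.
Proof.
move=> x0_real F_real; elim: r => // a r IHr; rewrite inE big_cons.
have rest_real : \big[Order.max/x0]_(i <- r) F i \is Num.real.
  by apply: bigmax_real => // i _.
rewrite comparable_le_max ?real_comparable //.
by case/orP=> [/eqP->|/IHr->]; rewrite ?lexx ?orbT.
Qed.

(* Clearing the denominator in C3: for weights a, b >= 0, a bound
   u <= (a x + b y) / (a + b) valid whenever a + b > 0 yields
   (a + b) u <= a x + b y. *)
Lemma weighted_mean_bound (R : numFieldType) (a b u x y : R) : 0 <= a -> 0 <= b ->
  (0 < a + b -> u <= (a * x + b * y) / (a + b)) -> (a + b) * u <= a * x + b * y.
Proof.
move=> a_ge0 b_ge0 u_le; have := addr_ge0 a_ge0 b_ge0.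
rewrite le0r => /orP[ab0|ab_gt0]; last by rewrite mulrC -ler_pdivlMr // u_le.
by move: ab0; rewrite paddr_eq0 // => /andP[/eqP-> /eqP->]; rewrite !(mul0r, addr0).
Qed.

Section MaxUtility.
Variable C : numClosedFieldType.
Variables d n : nat.
Variable rho : 'I_n -> 'M[C]_d.
Variable q : 'I_n -> C.
Variable U : utility C d n.

Lemma Ubar_attained m (A : {ffun 'I_m -> 'M[C]_d}) :
  exists G, Ubar rho q U A = avgU rho q U A G.
Proof.
rewrite /Ubar; elim/big_ind: _ => [|x y [G1 ->] [G2 ->]|G _]; last by exists G.
- by exists [ffun _ => ord0].
- by rewrite /Order.max; case: ifP => _; [exists G2 | exists G1].
Qed.

Lemma avgU_le_Ubar m (A : {ffun 'I_m -> 'M[C]_d}) G :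
  (forall G, avgU rho q U A G \is Num.real) -> avgU rho q U A G <= Ubar rho q U A.
Proof. by move=> avgU_real; apply: le_bigmax_real => //; apply: mem_index_enum. Qed.

End MaxUtility.

Section Refinement.
Variable C : numClosedFieldType.
Variables d n : nat.
Variable rho : 'I_n -> 'M[C]_d.
Variable q : 'I_n -> C.
Variable U : utility C d n.
Hypothesis rho_psd : forall nu, psdmx (rho nu).
Hypothesis q_gt0 : forall nu, 0 < q nu.
Hypothesis hC3 : condC3 rho U.

Definition refine_povm m (A : {ffun 'I_m -> 'M[C]_d}) (y : 'I_m) (P Q : 'M[C]_d)
  : {ffun 'I_m.+1 -> 'M[C]_d} :=
  [ffun k => if unlift ord_max k is Some k' then (if k' == y then P else A k') else Q].

Definition refine_strat m (G : {ffun 'I_m -> 'I_n.+1}) (y : 'I_m)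
  : {ffun 'I_m.+1 -> 'I_n.+1} :=
  [ffun k => if unlift ord_max k is Some k' then G k' else G y].

Lemma refine_povm_lift m (A : {ffun 'I_m -> 'M[C]_d}) y P Q k :
  refine_povm A y P Q (lift ord_max k) = if k == y then P else A k.
Proof. by rewrite ffunE liftK. Qed.

Lemma refine_povm_last m (A : {ffun 'I_m -> 'M[C]_d}) y P Q :
  refine_povm A y P Q ord_max = Q.
Proof. by rewrite ffunE unlift_none. Qed.

Lemma refine_strat_lift m (G : {ffun 'I_m -> 'I_n.+1}) y k :
  refine_strat G y (lift ord_max k) = G k.
Proof. by rewrite ffunE liftK. Qed.

Lemma refine_strat_last m (G : {ffun 'I_m -> 'I_n.+1}) y :
  refine_strat G y ord_max = G y.
Proof. by rewrite ffunE unlift_none. Qed.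

Lemma merge_refine_povm m (A : {ffun 'I_m -> 'M[C]_d}) y P Q : A y = P + Q ->
  mergePOVM (refine_povm A y P Q) (lift ord_max y) ord_max = A.
Proof.
move=> Ay; apply/ffunP => k; rewrite ffunE (inj_eq (@lift_inj _ _)).
by rewrite !refine_povm_lift refine_povm_last eqxx; case: eqP => [->|].
Qed.

Lemma merge_refine_strat m (G : {ffun 'I_m -> 'I_n.+1}) y :
  mergeStrat (refine_strat G y) ord_max = G.
Proof. by apply/ffunP => k; rewrite ffunE refine_strat_lift. Qed.

Lemma widen_ord_max_lift m (k : 'I_m) : widen_ord (leqnSn m) k = lift ord_max k.
Proof. by apply: val_inj; rewrite /= /bump leqNgt ltn_ord. Qed.

Lemma big_refine (R : Type) (idx : R) (op : Monoid.law idx) m (F : 'I_m.+1 -> R) :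
  \big[op/idx]_(k < m.+1) F k = op (\big[op/idx]_(k < m) F (lift ord_max k)) (F ord_max).
Proof.
by rewrite big_ord_recr; congr (op _ _); apply: eq_bigr => k _; rewrite widen_ord_max_lift.
Qed.

Lemma povm_refine m (A : {ffun 'I_m -> 'M[C]_d}) y P Q : povm A -> A y = P + Q ->
  psdmx P -> psdmx Q -> P != 0 -> Q != 0 -> povm (refine_povm A y P Q).
Proof.
move=> [A_psd [A_neq0 A_sum]] Ay P_psd Q_psd P0 Q0; split; [|split].
- by move=> k; rewrite ffunE; case: unliftP => [k' _|_] //; case: ifP.
- by move=> k; rewrite ffunE; case: unliftP => [k' _|_] //; case: ifP.
- rewrite big_refine refine_povm_last -A_sum (bigD1 y) //= [in RHS](bigD1 y) //=.
  rewrite refine_povm_lift eqxx Ay addrAC; congr (_ + _).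
  by apply: eq_bigr => k /negbTE ky; rewrite refine_povm_lift ky.
Qed.

Lemma avgU_refine m (A : {ffun 'I_m -> 'M[C]_d}) y P Q G :
  povm A -> A y = P + Q -> psdmx P -> psdmx Q -> P != 0 -> Q != 0 ->
  avgU rho q U A G <= avgU rho q U (refine_povm A y P Q) (refine_strat G y).
Proof.
move=> A_povm Ay P_psd Q_psd P0 Q0.
set A' := refine_povm A y P Q; set G' := refine_strat G y.
have A'_povm : povm A' by exact: povm_refine.
have new_ne : lift ord_max y != ord_max by rewrite eq_sym neq_lift.
have G'_eq : G' (lift ord_max y) = G' ord_max.
  by rewrite refine_strat_lift refine_strat_last.
have [merged_le merged_other] := hC3 A'_povm new_ne G'_eq.
rewrite merge_refine_povm // merge_refine_strat in merged_le merged_other.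
pose F r (B : {ffun 'I_r -> 'M[C]_d}) H k :=
  \sum_(nu < n) q nu * \tr (B k *m rho nu) * U B k H nu.
have unchanged : \sum_(k < m | k != y) F _ A G k
               = \sum_(k < m | k != y) F _ A' G' (lift ord_max k).
  apply: eq_bigr => k ky; apply: eq_bigr => nu _.
  by rewrite /A' refine_povm_lift (negbTE ky) merged_other // (inj_eq (@lift_inj _ _)).
rewrite /avgU -/(F _ A G) -/(F _ A' G') big_refine.
rewrite (bigD1 y) //= [in X in _ <= X](bigD1 y) //=.
rewrite unchanged addrAC lerD2r /F -big_split /=; apply: ler_sum => nu _.
rewrite /A' refine_povm_lift eqxx refine_povm_last Ay -!mulrA -mulrDr.
apply: ler_wpM2l; first exact: ltW.
rewrite mulmxDl mxtraceD weighted_mean_bound ?trace_psd_mul_ge0 // => tr_gt0.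
have := merged_le y erefl nu.
by rewrite /A' refine_povm_lift eqxx refine_povm_last mulmxDl mxtraceD => /(_ tr_gt0)[].
Qed.

Lemma Ubar_refine m (A : {ffun 'I_m -> 'M[C]_d}) y P Q :
  povm A -> A y = P + Q -> psdmx P -> psdmx Q -> P != 0 -> Q != 0 ->
  (forall G, avgU rho q U (refine_povm A y P Q) G \is Num.real) ->
  Ubar rho q U A <= Ubar rho q U (refine_povm A y P Q).
Proof.
move=> A_povm Ay P_psd Q_psd P0 Q0 avgU_real.
have [G ->] := Ubar_attained rho q U A.
apply: le_trans (avgU_refine G A_povm Ay P_psd Q_psd P0 Q0) _.
exact: avgU_le_Ubar.
Qed.

End Refinement.

Section RankOneRefinement.
Variable C : numClosedFieldType.
Variables d n : nat.
Variable rho : 'I_n -> 'M[C]_d.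
Variable q : 'I_n -> C.
Variable U : utility C d n.
Hypothesis rho_psd : forall nu, psdmx (rho nu).
Hypothesis q_gt0 : forall nu, 0 < q nu.
Hypothesis U_real : forall m (A : {ffun 'I_m -> 'M[C]_d}) y G nu,
  povm A -> U A y G nu \is Num.real.
Hypothesis hC3 : condC3 rho U.

(* The averaged utility of a POVM is real: probabilities are nonnegative. *)
Lemma avgU_real m (A : {ffun 'I_m -> 'M[C]_d}) G : povm A -> avgU rho q U A G \is Num.real.
Proof.
move=> A_povm; apply: rpred_sum => y _; apply: rpred_sum => nu _.
apply: rpredM; last exact: U_real.
apply: rpredM; first exact: gtr0_real.
by apply/ger0_real/trace_psd_mul_ge0; [case: A_povm|].
Qed.

Definition has_rank_one_improvement m (A : {ffun 'I_m -> 'M[C]_d}) :=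
  exists m' (B : {ffun 'I_m' -> 'M[C]_d}),
    [/\ povm B, (forall y, \rank (B y) = 1%N) & Ubar rho q U A <= Ubar rho q U B].

Definition surplus m (ls : 'I_m -> 'rV[C]_d) := (\sum_(y < m) (support_size (ls y)).-1)%N.

Lemma no_surplus_improvement m (A : {ffun 'I_m -> 'M[C]_d}) Ws ls :
  povm A -> (forall y, spectral_form (A y) (Ws y) (ls y)) ->
  (forall y, support_size (ls y) <= 1)%N -> has_rank_one_improvement A.
Proof.
move=> A_povm A_spec ls_small; exists m, A; split => // y.
by apply: spectral_form_rank1 (A_spec y) _ (ls_small y); case: A_povm => _ [].
Qed.

Lemma refine_spectral_step m (A : {ffun 'I_m -> 'M[C]_d}) Ws ls y :
  povm A -> (forall k, spectral_form (A k) (Ws k) (ls k)) ->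
  (1 < support_size (ls y))%N ->
  exists (A' : {ffun 'I_m.+1 -> 'M[C]_d}) Ws' ls',
    [/\ povm A', forall k, spectral_form (A' k) (Ws' k) (ls' k),
        (surplus ls' < surplus ls)%N & Ubar rho q U A <= Ubar rho q U A'].
Proof.
move=> A_povm A_spec ly_big.
have [P [Q [lP [lQ [Ay P_spec Q_spec lP_size lQ_size]]]]] :=
  spectral_form_split (A_spec y) ly_big.
have P0 : P != 0 by apply: spectral_form_neq0 P_spec _; rewrite lP_size.
have Q0 : Q != 0 by apply: spectral_form_neq0 Q_spec _; rewrite lQ_size; lia.
have [P_psd Q_psd] := (spectral_form_psd P_spec, spectral_form_psd Q_spec).
have A'_povm := povm_refine A_povm Ay P_psd Q_psd P0 Q0.
pose Ws' k := if unlift ord_max k is Some k' then Ws k' else Ws y.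
pose ls' k := if unlift ord_max k is Some k' then (if k' == y then lP else ls k') else lQ.
exists (refine_povm A y P Q), Ws', ls'; split => //.
- move=> k; rewrite /Ws' /ls' ffunE.
  by case: unliftP => [k' _|_] //; case: eqP => [->|].
- rewrite /surplus big_refine /ls' unlift_none.
  under eq_bigr => k _ do rewrite liftK.
  rewrite (bigD1 y) //= [in X in (_ < X)%N](bigD1 y) //= eqxx lP_size lQ_size.
  under eq_bigr => k ky do rewrite (negbTE ky).
  lia.
- by apply: Ubar_refine => // G; apply: avgU_real.
Qed.

Lemma improvement_by_surplus N m (A : {ffun 'I_m -> 'M[C]_d}) Ws ls :
  (surplus ls <= N)%N -> povm A -> (forall y, spectral_form (A y) (Ws y) (ls y)) ->
  has_rank_one_improvement A.
Proof.
elim: N m A Ws ls => [|N IHN] m A Ws ls surplus_le A_povm A_spec;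
  have [y /= ly_big|small] := pickP [pred y | 1 < support_size (ls y)]%N;
  try by apply: no_surplus_improvement A_povm A_spec _ => y;
         rewrite leqNgt; apply/negbT/small.
- by move: surplus_le; rewrite /surplus (bigD1 y) //=; lia.
have [A' [Ws' [ls' [A'_povm A'_spec surplus_lt Ubar_le]]]] :=
  refine_spectral_step A_povm A_spec ly_big.
have [|m' [B [B_povm B_rank Ubar_B]]] := IHN _ A' Ws' ls' _ A'_povm A'_spec; first lia.
by exists m', B; split => //; apply: le_trans Ubar_B.
Qed.

Lemma rank_one_improvement m (A : {ffun 'I_m -> 'M[C]_d}) :
  povm A -> has_rank_one_improvement A.
Proof.
move=> A_povm.
have A_spec y : exists sp : 'M[C]_d * 'rV[C]_d, spectral_form (A y) sp.1 sp.2.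
  by have [W [l ?]] := spectral_form_exists (A_povm.1 y); exists (W, l).
have [sp sp_spec] := fin_all_exists A_spec.
exact: improvement_by_surplus (leqnn _) A_povm sp_spec.
Qed.

End RankOneRefinement.

Theorem mainTheorem6 (C : numClosedFieldType) (d n : nat)
    (rho : 'I_n -> 'M[C]_d) (q : 'I_n -> C)
    (hrho : forall nu, density (rho nu))
    (hq : forall nu, 0 < q nu) (hqsum : \sum_(nu < n) q nu = 1)
    (U : utility C d n)
    (hUreal : forall m (A : {ffun 'I_m -> 'M[C]_d}) y G nu, povm A -> U m A y G nu \is Num.real)
    (hC1 : condC1 U) (hC2 : condC2 rho q U) (hC3 : condC3 rho U) :
  (forall m (A : {ffun 'I_m -> 'M[C]_d}), povm A ->
     exists m' (B : {ffun 'I_m' -> 'M[C]_d}),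
       [/\ povm B, (forall y, \rank (B y) = 1%N) & Ubar rho q U A <= Ubar rho q U B])
  /\
  ((exists m0 (A0 : {ffun 'I_m0 -> 'M[C]_d}), povm A0 /\
      forall m (A : {ffun 'I_m -> 'M[C]_d}), povm A -> Ubar rho q U A <= Ubar rho q U A0) ->
   exists m' (B : {ffun 'I_m' -> 'M[C]_d}),
     [/\ povm B, (forall y, \rank (B y) = 1%N) &
         forall m (A : {ffun 'I_m -> 'M[C]_d}), povm A -> Ubar rho q U A <= Ubar rho q U B]).
Proof.
have rho_psd nu : psdmx (rho nu) by case: (hrho nu).
have improve := rank_one_improvement rho_psd hq hUreal hC3.
split=> // -[m0 [A0 [A0_povm A0_max]]].
have [m' [B [B_povm B_rank Ubar_B]]] := improve _ _ A0_povm.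
by exists m', B; split=> // m A A_povm; apply: le_trans (A0_max _ _ A_povm) Ubar_B.
Qed.
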